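(* Let $n\ge 3$, $c\ge 1$, and let $\upsilon':UV_n(c)\to\mathrm{GL}_n(\mathbb{C})$ be the representation \[ \upsilon'(\rho_i)=\mathrm{diag}\Big(I_{i-1},\begin{pmatrix}0&1\\ 1&0\end{pmatrix},I_{n-i-1}\Big),\qquad \upsilon'(\sigma_{i,t})=\mathrm{diag}\Big(I_{i-1},\begin{pmatrix}s_{1,t}&s_{2,t}\\ s_{3,t}&s_{4,t}\end{pmatrix},I_{n-i-1}\Big) \] for $1\le i\le n-1$, $1\le t\le c$, where $s_{j,t}\in\mathbb{C}$ with $s_{1,t}s_{4,t}-s_{2,t}s_{3,t}\neq0$. Then $\upsilon'$ is reducible if and only if either $s_{1,t}+s_{2,t}=1$ and $s_{3,t}+s_{4,t}=1$ for all $1\le t\le c$, or $s_{1,t}+s_{3,t}=1$ and $s_{2,t}+s_{4,t}=1$ for all $1\le t\le c$.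
   Context: $UV_n(c)$ is the group with generators $\rho_i$ ($1\le i\le n-1$), $\sigma_{i,t}$ ($1\le i\le n-1$, $1\le t\le c$) and relations $\rho_i\rho_{i+1}\rho_i=\rho_{i+1}\rho_i\rho_{i+1}$, $\rho_i\rho_j=\rho_j\rho_i$ ($|i-j|\ge2$), $\rho_i^2=1$, $\sigma_{i,t}\sigma_{j,\ell}=\sigma_{j,\ell}\sigma_{i,t}$ ($|i-j|\ge2$), $\sigma_{i,t}\rho_j=\rho_j\sigma_{i,t}$ ($|i-j|\ge2$), $\rho_i\rho_{i+1}\sigma_{i,t}=\sigma_{i+1,t}\rho_i\rho_{i+1}$ ($1\le i\le n-2$). $\mathrm{diag}(\cdot,\cdot,\cdot)$ denotes a block diagonal matrix and $I_r$ the $r\times r$ identity. A representation is reducible if $\mathbb{C}^n$ has a nonzero proper subspace invariant under all the image matrices. *)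

(* The complex numbers are modelled as R[i] = complex R
   for an arbitrary real-closed field R (e.g. the reals, giving C). *)
From HB Require Import structures.
From mathcomp Require Import all_boot all_order all_algebra.
From mathcomp Require Import complex.
Set Implicit Arguments. Unset Strict Implicit. Unset Printing Implicit Defensive.
Import Order.TTheory GRing.Theory Num.Theory.
Local Open Scope ring_scope.

(* diag(I_{i}, [[a b];[c d]], I_{n-i-2}) with 0-based i:
   the 2x2 block sits at rows/columns i and i+1 (paper's index i+1). *)
Definition blk2 (F : nzRingType) (n i : nat) (a b c d : F) : 'M[F]_n :=
  \matrix_(j < n, k < n)
    if (j == i :> nat) && (k == i :> nat) then a
    else if (j == i :> nat) && (k == i.+1 :> nat) then b
    else if (j == i.+1 :> nat) && (k == i :> nat) then c
    else if (j == i.+1 :> nat) && (k == i.+1 :> nat) then d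
    else (j == k)%:R.

Definition ups_rho (F : nzRingType) (n i : nat) : 'M[F]_n := blk2 n i 0 1 1 0.

Definition ups_sigma (F : nzRingType) (c : nat) (s1 s2 s3 s4 : 'I_c -> F)
  (n i : nat) (t : 'I_c) : 'M[F]_n := blk2 n i (s1 t) (s2 t) (s3 t) (s4 t).

Definition col_invariant (F : fieldType) (n : nat) (U M : 'M[F]_n) : Prop :=
  exists X : 'M[F]_n, M *m U = U *m X.

(* The matrix family is reducible: some nonzero proper subspace of F^n
   (the column space of U, of dimension \rank U) is invariant under all
   images of the generators rho_i, sigma_{i,t} (1 <= i <= n-1). *)
Definition ups_reducible (F : fieldType) (n c : nat)
  (s1 s2 s3 s4 : 'I_c -> F) : Prop :=
  exists U : 'M[F]_n, [/\ (0 < \rank U)%N, (\rank U < n)%N &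
    forall i : nat, (i < n.-1)%N ->
      col_invariant U (ups_rho F n i) /\
      forall t : 'I_c, col_invariant U (ups_sigma s1 s2 s3 s4 n i t)].

From HB Require Import structures.
From mathcomp Require Import all_boot all_order all_algebra.
From mathcomp Require Import complex ring zify.
Set Implicit Arguments. Unset Strict Implicit. Unset Printing Implicit Defensive.
Import Order.TTheory GRing.Theory Num.Theory.
Local Open Scope ring_scope.

(* The rho_i permute coordinates, so a subspace W invariant under all of them
   either consists of constant vectors, hence is spanned by the all-ones vector,
   or contains a vector v with v_i <> v_(i+1); then v - rho_i v is a nonzero
   multiple of e_i - e_(i+1), and moving it with the rho_j puts every
   e_j - e_(j+1) in W.  In the first case invariance under sigma_(1,t) forces
   the row sums of the t-th block to be 1.  In the second case e_1 is not in W
   (otherwise W is everything), and sigma_(1,t) (e_1 - e_3) in W forces the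
   column sums to be 1.  Conversely these conditions make the all-ones line,
   resp. the sum-zero hyperplane, invariant.  Subspaces are represented as row spaces, on which the
   matrices act by their transposes. *)

Lemma trmx_blk2 (F : nzRingType) n i (a b c d : F) :
  (blk2 n i a b c d)^T = blk2 n i a c b d.
Proof.
apply/matrixP => j k; rewrite !mxE.
case: (j == i :> nat) / eqP; case: (j == i.+1 :> nat) / eqP;
  case: (k == i :> nat) / eqP; case: (k == i.+1 :> nat) / eqP => //=; try lia.
all: by rewrite eq_sym.
Qed.

Lemma mul_row_blk2 (F : comNzRingType) n i (a b c d : F) (v : 'rV[F]_n.+1) :
  (i < n)%N ->
  v *m blk2 n.+1 i a b c d =
  v + (v 0 (inord i) * (a - 1) + v 0 (inord i.+1) * c) *: delta_mx 0 (inord i)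
    + (v 0 (inord i) * b + v 0 (inord i.+1) * (d - 1)) *: delta_mx 0 (inord i.+1).
Proof.
move=> lt_i_n; set p : 'I_n.+1 := inord i; set q : 'I_n.+1 := inord i.+1.
have pE : p = i :> nat by rewrite inordK // ltnS ltnW.
have qE : q = i.+1 :> nat by rewrite inordK.
have neq_qp : q != p by rewrite -val_eqE /= pE qE (gtn_eqF (ltnSn i)).
have blkE l k : blk2 n.+1 i a b c d l k =
    if l == p then (if k == p then a else if k == q then b else 0)
    else if l == q then (if k == p then c else if k == q then d else 0)
    else (l == k)%:R.
  rewrite mxE -!val_eqE /= pE qE.
  case: (l == i :> nat) / eqP; case: (l == i.+1 :> nat) / eqP;
    case: (k == i :> nat) / eqP; case: (k == i.+1 :> nat) / eqP => //=; try lia;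
    by move=> *; case: eqP => // lk; exfalso; lia.
apply/rowP => k; rewrite !mxE eqxx /= (bigD1 p) // (bigD1 q) //= !blkE !eqxx.
rewrite (negbTE neq_qp) (eq_bigr (fun l => v 0 l * (l == k)%:R)); last first.
  by move=> l /andP[lp lq]; rewrite blkE (negbTE lp) (negbTE lq).
have [-> | kp] := eqVneq k p; last have [-> | kq] := eqVneq k q.
- rewrite big1 => [|l /andP[lp _]]; last by rewrite (negbTE lp) mulr0.
  by rewrite eq_sym (negbTE neq_qp) /=; ring.
- rewrite big1 => [|l /andP[_ lq]]; last by rewrite (negbTE lq) mulr0.
  by rewrite /=; ring.
rewrite (bigD1 k) /= ?kp ?kq // big1 => [|l /andP[_ /negbTE ->]]; last by rewrite mulr0.
by rewrite eqxx /=; ring.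
Qed.

Lemma nat_chain_iff (m : nat) (P : nat -> Prop) :
  (forall j, (j.+1 < m)%N -> P j <-> P j.+1) ->
  forall j, (j < m)%N -> P j <-> P 0.
Proof.
move=> step; elim=> [// | j IH] lt_j1_m.
by have := step j lt_j1_m; have := IH (ltnW lt_j1_m); tauto.
Qed.

Section RowAction.

Variables (F : fieldType) (n : nat).

Local Notation e j := (delta_mx 0 (inord j) : 'rV[F]_n.+1).
Local Notation ones := (const_mx 1 : 'rV[F]_n.+1).

Lemma eq_inord (k : 'I_n.+1) j : (j <= n)%N -> (k == inord j) = (k == j :> nat).
Proof. by move=> le_j_n; rewrite -val_eqE /= inordK. Qed.

Lemma subr_mul_swap (v : 'rV[F]_n.+1) i : (i < n)%N ->
  v - v *m ups_rho F n.+1 i = (v 0 (inord i) - v 0 (inord i.+1)) *: (e i - e i.+1).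
Proof.
by move=> lt_i_n; rewrite /ups_rho mul_row_blk2 //; apply/rowP => k; rewrite !mxE; ring.
Qed.

Lemma swap_stable_sub_diff m (V : 'M[F]_(m, n.+1)) (v : 'rV[F]_n.+1) i :
  (i < n)%N -> stablemx V (ups_rho F n.+1 i) -> (v <= V)%MS ->
  v 0 (inord i) != v 0 (inord i.+1) -> (e i - e i.+1 <= V)%MS.
Proof.
move=> lt_i_n stV vV neq_v.
rewrite -(eqmx_scale _ (_ : v 0 (inord i) - v 0 (inord i.+1) != 0)) ?subr_eq0 //.
by rewrite -subr_mul_swap // addmx_sub ?eqmx_opp // (submx_trans (submxMr _ vV)).
Qed.

Lemma nonconst_row (v : 'rV[F]_n.+1) :
  ~~ (v <= ones)%MS -> exists2 i, (i < n)%N & v 0 (inord i) != v 0 (inord i.+1).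
Proof.
move=> v_nconst.
have [/existsP [i neq_v] | /existsPn eq_v] :=
  boolP [exists i : 'I_n, v 0 (inord i) != v 0 (inord i.+1)]; first by exists i.
case/negP: v_nconst; apply/sub_rVP; exists (v 0 (inord 0)).
have v_const j : (j <= n)%N -> v 0 (inord j) = v 0 (inord 0).
  elim: j => // j IH lt_j_n.
  by rewrite -(eqP (negPn (eq_v (Ordinal lt_j_n)))) IH // ltnW.
by apply/rowP => k; rewrite !mxE mulr1 -(inord_val k) v_const // -ltnS.
Qed.

Lemma swap_stable_cases m (V : 'M[F]_(m, n.+1)) :
  (forall i, (i < n)%N -> stablemx V (ups_rho F n.+1 i)) ->
  (V <= ones)%MS \/ forall j, (j < n)%N -> (e j - e j.+1 <= V)%MS.
Proof.
move=> stV; have [|/row_subPn [r /nonconst_row [i0 lt_i0_n neq_r]]] := boolP (V <= ones)%MS.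
  by left.
right; have diff_i0 := swap_stable_sub_diff lt_i0_n (stV _ lt_i0_n) (row_sub r V) neq_r.
have diff_step j : (j.+1 < n)%N -> (e j - e j.+1 <= V)%MS <-> (e j.+1 - e j.+2 <= V)%MS.
  move=> lt_j1_n; have lt_j_n := ltnW lt_j1_n; have le_j_n := ltnW lt_j_n.
  split=> dV; [apply: (swap_stable_sub_diff lt_j1_n (stV _ lt_j1_n) dV)
              | apply: (swap_stable_sub_diff lt_j_n (stV _ lt_j_n) dV)].
    rewrite !mxE !eq_inord ?inordK // !eqSS !eqxx (gtn_eqF (ltnSn j)) (gtn_eqF (leqnSn j.+1)).
    by rewrite /= subrr sub0r oppr_eq0 oner_eq0.
  rewrite !mxE !eq_inord ?inordK // !eqSS !eqxx (ltn_eqF (ltnSn j)) (ltn_eqF (leqnSn j.+1)).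
  by rewrite /= subrr subr0 eq_sym oner_eq0.
move=> j lt_j_n.
by apply/(nat_chain_iff diff_step lt_j_n)/(nat_chain_iff diff_step lt_i0_n).
Qed.

Lemma row_full_diffs m (V : 'M[F]_(m, n.+1)) :
  (forall j, (j < n)%N -> (e j - e j.+1 <= V)%MS) -> (e 0 <= V)%MS -> row_full V.
Proof.
move=> diffV e0V; have eV j : (j <= n)%N -> (e j <= V)%MS.
  elim: j => // j IH lt_j_n; rewrite -[e j.+1](subKr (e j)).
  by rewrite addmx_sub ?eqmx_opp ?diffV ?IH // ltnW.
by rewrite -sub1mx; apply/row_subP => k; rewrite row1 -(inord_val k) eV // -ltnS.
Qed.

Lemma const_mx1_neq0 : ones != 0.
Proof. by apply/eqP => /rowP/(_ 0)/eqP; rewrite !mxE oner_eq0. Qed.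

Lemma mxrank_kermx_ones : \rank (kermx (const_mx 1 : 'cV[F]_n.+1)) = n.
Proof. by rewrite mxrank_ker -trmx_const mxrank_tr rank_rV const_mx1_neq0 subn1. Qed.

Lemma ones_mul_blk2 i (a b c d : F) : (i < n)%N -> a + c = 1 -> b + d = 1 ->
  ones *m blk2 n.+1 i a b c d = ones.
Proof.
move=> lt_i_n ac bd; rewrite mul_row_blk2 // !mxE !mul1r.
by rewrite (addrAC a) ac (addrA b) bd subrr !scale0r !addr0.
Qed.

Lemma blk2_mul_ones i (a b c d : F) : (i < n)%N -> a + b = 1 -> c + d = 1 ->
  blk2 n.+1 i a b c d *m const_mx 1 = const_mx 1 :> 'cV_n.+1.
Proof.
move=> lt_i_n ab cd.
by rewrite -trmx_const -[blk2 _ _ _ _ _ _]trmxK -trmx_mul trmx_blk2 ones_mul_blk2.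
Qed.

Lemma ones_ups_stable k (s1 s2 s3 s4 : 'I_k -> F) i : (i < n)%N ->
  (forall t, s1 t + s2 t = 1 /\ s3 t + s4 t = 1) ->
  stablemx ones (ups_rho F n.+1 i) /\
  forall t, stablemx ones (ups_sigma s1 s3 s2 s4 n.+1 i t).
Proof.
move=> lt_i_n sums; split=> [|t]; last case: (sums t) => ac bd.
all: by rewrite [_ *m _]ones_mul_blk2 ?add0r ?addr0.
Qed.

Lemma kermx_ones_ups_stable k (s1 s2 s3 s4 : 'I_k -> F) i : (i < n)%N ->
  (forall t, s1 t + s3 t = 1 /\ s2 t + s4 t = 1) ->
  stablemx (kermx (const_mx 1 : 'cV[F]_n.+1)) (ups_rho F n.+1 i) /\
  forall t, stablemx (kermx (const_mx 1 : 'cV[F]_n.+1)) (ups_sigma s1 s3 s2 s4 n.+1 i t).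
Proof.
move=> lt_i_n sums.
have stK (a b c d : F) : a + b = 1 -> c + d = 1 ->
    stablemx (kermx (const_mx 1 : 'cV[F]_n.+1)) (blk2 n.+1 i a b c d).
  by move=> ab cd; rewrite sub_kermx -mulmxA blk2_mul_ones // mulmx_ker.
split=> [|t]; first by apply: stK; rewrite ?add0r ?addr0.
by case: (sums t); apply: stK.
Qed.

Hypothesis n_gt1 : (1 < n)%N.

Lemma ones_stable_blk2 m (V : 'M[F]_(m, n.+1)) (a b c d : F) :
  V != 0 -> (V <= ones)%MS -> stablemx V (blk2 n.+1 0 a b c d) ->
  a + c = 1 /\ b + d = 1.
Proof.
move=> nzV Vones stV; have n_gt0 := ltnW n_gt1.
have onesV : (ones <= V)%MS.
  rewrite -(mxrank_leqif_sup Vones).2 eqn_leq mxrankS //= rank_rV const_mx1_neq0.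
  by rewrite lt0n mxrank_eq0.
have [x onesN] : exists x, ones *m blk2 n.+1 0 a b c d = x *: ones.
  by apply/sub_rVP; apply: submx_trans (submxMr _ onesV) (submx_trans stV Vones).
have onesN_at k : (k <= n)%N ->
    1 + (a - 1 + c) * (k == 0)%:R + (b + (d - 1)) * (k == 1)%:R = x.
  move=> le_k_n; move/rowP/(_ (inord k)): onesN.
  by rewrite mul_row_blk2 // !mxE !eq_inord ?inordK // !mul1r mulr1.
have x1 : x = 1 by rewrite -(onesN_at 2 n_gt1) /= !mulr0 !addr0.
move: (onesN_at 0 isT) (onesN_at 1 n_gt0); rewrite x1 /= mulr1 mulr0 !addr0.
by move=> ac bd; split; [rewrite -[RHS]ac | rewrite -[RHS]bd]; ring.
Qed.

Lemma diffs_stable_blk2 m (V : 'M[F]_(m, n.+1)) (a b c d : F) :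
  (forall j, (j < n)%N -> (e j - e j.+1 <= V)%MS) -> ~~ row_full V ->
  stablemx V (blk2 n.+1 0 a b c d) -> a + b = 1 /\ c + d = 1.
Proof.
move=> diffV not_full stV; have n_gt0 := ltnW n_gt1.
have e0_notin x : (x *: e 0 <= V)%MS -> x = 0.
  move=> xV; have [// | nz_x] := eqVneq x 0; case/negP: not_full.
  by apply: row_full_diffs diffV _; rewrite -(eqmx_scale _ nz_x).
have NV v : (v <= V)%MS -> (v *m blk2 n.+1 0 a b c d <= V)%MS.
  by move=> vV; apply: submx_trans (submxMr _ vV) stV.
have d0V := diffV 0 n_gt0; have d1V := diffV 1 n_gt1.
have d01V := addmx_sub d0V d1V.
split; apply/eqP; rewrite -subr_eq0; apply/eqP/e0_notin.
- have -> : (a + b - 1) *: e 0 =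
      (e 0 - e 1 + (e 1 - e 2)) *m blk2 n.+1 0 a b c d - (e 0 - e 1 + (e 1 - e 2))
      + b *: (e 0 - e 1).
    rewrite mul_row_blk2 //; apply/rowP => k; rewrite !mxE !eq_inord ?inordK //=.
    ring.
  apply: (addmx_sub _ (scalemx_sub _ d0V)).
  by apply: addmx_sub; [exact: NV | rewrite eqmx_opp].
have -> : (c + d - 1) *: e 0 =
    (e 1 - e 2) *m blk2 n.+1 0 a b c d - (e 1 - e 2) + (d - 1) *: (e 0 - e 1).
  rewrite mul_row_blk2 //; apply/rowP => k; rewrite !mxE !eq_inord ?inordK //=.
  ring.
apply: (addmx_sub _ (scalemx_sub _ d0V)).
by apply: addmx_sub; [exact: NV | rewrite eqmx_opp].
Qed.

End RowAction.

Lemma col_invariant_trmx (F : fieldType) n (U M : 'M[F]_n) :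
  col_invariant U M <-> stablemx U^T M^T.
Proof.
split=> [[X eqMU] | /submxP [X eqUM]].
  by rewrite -trmx_mul eqMU trmx_mul submxMl.
by exists X^T; rewrite -[M *m U]trmxK trmx_mul eqUM trmx_mul trmxK.
Qed.

Lemma ups_reducible_rowP (F : fieldType) n c (s1 s2 s3 s4 : 'I_c -> F) :
  ups_reducible n s1 s2 s3 s4 <->
  exists m (V : 'M[F]_(m, n)), [/\ (0 < \rank V)%N, (\rank V < n)%N &
    forall i, (i < n.-1)%N -> stablemx V (ups_rho F n i) /\
      forall t, stablemx V (ups_sigma s1 s3 s2 s4 n i t)].
Proof.
have rhoT i : (ups_rho F n i)^T = ups_rho F n i by apply: trmx_blk2.
have sigmaT i t : (ups_sigma s1 s2 s3 s4 n i t)^T = ups_sigma s1 s3 s2 s4 n i t.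
  exact: trmx_blk2.
split=> [[U [U_gt0 U_ltn invU]] | [m [V [V_gt0 V_ltn stV]]]].
  exists n, U^T; rewrite mxrank_tr; split=> // i lt_i_n.
  have [/col_invariant_trmx rhoU sigmaU] := invU i lt_i_n; rewrite -rhoT.
  by split=> // t; rewrite -sigmaT; apply/col_invariant_trmx.
exists (<<V>>%MS)^T; rewrite mxrank_tr genmxE; split=> // i lt_i_n.
have [rhoV sigmaV] := stV i lt_i_n.
split=> [|t]; apply/col_invariant_trmx; rewrite trmxK (eqmx_stable _ (genmxE V)).
  by rewrite rhoT.
by rewrite sigmaT.
Qed.

Unset Implicit Arguments.
Set Strict Implicit.
Set Printing Implicit Defensive.

Theorem theorem3p4 (R : rcfType) (n c : nat) (hn : (3 <= n)%N) (hc : (1 <= c)%N)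
  (s1 s2 s3 s4 : 'I_c -> R[i])
  (hdet : forall t : 'I_c, s1 t * s4 t - s2 t * s3 t != 0) :
  ups_reducible n s1 s2 s3 s4 <->
  ((forall t : 'I_c, s1 t + s2 t = 1 /\ s3 t + s4 t = 1) \/
   (forall t : 'I_c, s1 t + s3 t = 1 /\ s2 t + s4 t = 1)).
Proof.
case: n hn => [// | n] n_gt1; have n_gt0 : (0 < n)%N := ltnW n_gt1.
apply: iff_trans (ups_reducible_rowP _ _ _ _ _) _; split.
  case=> m [V [V_gt0 V_ltn stV]].
  have [V_ones | V_diffs] := swap_stable_cases (fun i lt_i_n => (stV i lt_i_n).1).
    have nzV : V != 0 by rewrite -mxrank_eq0 -lt0n.
    by left=> t; apply: (ones_stable_blk2 n_gt1 nzV V_ones ((stV 0 n_gt0).2 t)).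
  have not_full : ~~ row_full V by rewrite /row_full ltn_eqF.
  by right=> t; apply: (diffs_stable_blk2 n_gt1 V_diffs not_full ((stV 0 n_gt0).2 t)).
case=> sums; [exists 1%N, (const_mx 1 : 'rV_n.+1)
             | exists n.+1, (kermx (const_mx 1 : 'cV_n.+1))].
  rewrite rank_rV const_mx1_neq0; split=> // i lt_i_n.
  exact: (ones_ups_stable lt_i_n sums).
rewrite mxrank_kermx_ones.
by split=> // i lt_i_n; exact: (kermx_ones_ups_stable lt_i_n sums).
Qed.
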